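(* Let $\mathfrak g$ be a basic simple Lie superalgebra with an $\mathfrak{sl}_2$-triple $\{e,x,f\}$ giving a minimal grading $\mathfrak g=\mathbb Cf\oplus\mathfrak g_{-1/2}\oplus\mathfrak g_0\oplus\mathfrak g_{1/2}\oplus\mathbb Ce$, and suppose the $\mathfrak g_0$-module $\mathfrak g_{1/2}$ is irreducible. If $\phi,\phi'$ are almost compact involutions of $\mathfrak g$ with $\phi|_{\mathfrak g_0}=\phi'|_{\mathfrak g_0}$, then either $\phi'=\phi$ or $\phi'(a)=(-1)^{2j}\phi(a)$ for all $a\in\mathfrak g_j$, $j\in\{0,\pm\frac12,\pm1\}$. (That is, an almost compact involution is determined up to a sign by its action on $\mathfrak g_0$.)
   Context: $\mathfrak g_j$ denotes the $j$-eigenspace of $\mathrm{ad}\,x$; $[x,e]=e$, $[x,f]=-f$, $[e,f]=x$; $\mathfrak g_{\pm1/2}$ odd, $\mathfrak g_0$ even. $\mathfrak g^\natural$ is the centralizer of $\{e,x,f\}$ in $\mathfrak g_{\bar0}$. An almost compact involution is a conjugate-linear involutive automorphism of $\mathfrak g$ fixing $e,x,f$ whose restriction to $\mathfrak g^\natural$ is compact. *)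

(* Lie superalgebras are finite-dimensional vector spaces
   (vectType C) with a Z/2-grading given by two subspaces and a bracket. *)
From HB Require Import structures.
From mathcomp Require Import all_boot all_order all_algebra.
From mathcomp Require Import complex.
From mathcomp Require Import reals.
Set Implicit Arguments. Unset Strict Implicit. Unset Printing Implicit Defensive.
Import Order.TTheory GRing.Theory Num.Theory.
Local Open Scope ring_scope.

Section LieSuper.
Variable R : realType.
Local Notation C := R[i].
Variable V : vectType C.
Variables (ev od : {vspace V}) (br : V -> V -> V).

Definition homog (p : bool) (u : V) : Prop :=
  u \in (if p then od else ev).

Definition ssign (p q : bool) : C := (-1) ^+ (p && q).

Definition is_lie_superalgebra : Prop :=
  [/\ (ev + od)%VS = fullv /\ (ev :&: od)%VS = 0%VS,
      (forall (a : C) u v w, br (a *: u + v) w = a *: br u w + br v w)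
      /\ (forall (a : C) u v w, br u (a *: v + w) = a *: br u v + br u w),
      (forall p q u v, homog p u -> homog q v -> homog (addb p q) (br u v)),
      (forall p q u v, homog p u -> homog q v -> br u v = - (ssign p q *: br v u))
    & (forall p q u v w, homog p u -> homog q v ->
         br u (br v w) = br (br u v) w + ssign p q *: br v (br u w))].

Definition graded_ideal (I : {vspace V}) : Prop :=
  (I = (I :&: ev) + (I :&: od))%VS /\ (forall u v, v \in I -> br u v \in I).

Definition simple_lsa : Prop :=
  is_lie_superalgebra /\ (exists u v, br u v != 0) /\
  (forall I, graded_ideal I -> I = 0%VS \/ I = fullv).

(* the even part, a Lie algebra, is reductive: its adjoint representation is
   completely reducible (every ad-invariant subspace has an ad-invariant
   complement). *)
Definition ad_inv_even (W : {vspace V}) : Prop :=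
  (W <= ev)%VS /\ (forall u w, u \in ev -> w \in W -> br u w \in W).
Definition even_part_reductive : Prop :=
  forall W, ad_inv_even W ->
    exists W', ad_inv_even W' /\ (W :&: W' = 0)%VS /\ (W + W' = ev)%VS.

(* nondegenerate even supersymmetric invariant bilinear form *)
Definition good_form (B : V -> V -> C) : Prop :=
  [/\ (forall (a : C) u v w, B (a *: u + v) w = a * B u w + B v w),
      (forall (a : C) u v w, B u (a *: v + w) = a * B u v + B u w),
      (forall u v, u \in ev -> v \in od -> B u v = 0)
      /\ (forall p q u v, homog p u -> homog q v -> B u v = ssign p q * B v u),
      (forall u v w, B (br u v) w = B u (br v w))
    & (forall u, (forall v, B u v = 0) -> u = 0)].

Definition basic_simple : Prop :=
  [/\ simple_lsa, even_part_reductive & exists B, good_form B].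

Definition in_gr (x : V) (j : C) (a : V) : Prop := br x a = j *: a.

Definition minimal_sl2 (e x f : V) : Prop :=
  [/\ [/\ e \in ev, x \in ev & f \in ev],
      [/\ br x e = e, br x f = - f & br e f = x],
      (forall a, exists am1 amh a0 ah a1,
          [/\ in_gr x (-1) am1 /\ in_gr x (- 2^-1) amh, in_gr x 0 a0,
              in_gr x (2^-1) ah, in_gr x 1 a1
            & a = am1 + amh + a0 + ah + a1]),
      (forall a, in_gr x 1 a -> exists c : C, a = c *: e)
      /\ (forall a, in_gr x (-1) a -> exists c : C, a = c *: f)
    & (forall a, in_gr x (2^-1) a \/ in_gr x (- 2^-1) a -> a \in od)
      /\ (forall a, in_gr x 0 a -> a \in ev)].

Definition half_irreducible (x : V) : Prop :=
  (exists a, in_gr x (2^-1) a /\ a != 0) /\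
  forall W : {vspace V},
    (forall a, a \in W -> in_gr x (2^-1) a) ->
    (forall c a, in_gr x 0 c -> a \in W -> br c a \in W) ->
    W = 0%VS \/ (forall a, in_gr x (2^-1) a -> a \in W).

Definition in_gnat (e x f a : V) : Prop :=
  [/\ a \in ev, br e a = 0, br x a = 0 & br f a = 0].

Definition conj_lin_inv_aut (phi : V -> V) : Prop :=
  [/\ (forall (a : C) u v, phi (a *: u + v) = conjc a *: phi u + phi v),
      (forall u, phi (phi u) = u),
      (forall u v, phi (br u v) = br (phi u) (phi v)),
      (forall u, u \in ev -> phi u \in ev)
    & (forall u, u \in od -> phi u \in od)].

(* phi restricted to g^natural is compact: the real Lie algebra
   k = {a in g^natural | phi a = a} (the real form defined by phi) is compact,
   i.e. carries a positive definite ad(k)-invariant real inner product. *)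
Definition compact_on_gnat (e x f : V) (phi : V -> V) : Prop :=
  let K a := in_gnat e x f a /\ phi a = a in
  exists ip : V -> V -> R,
    [/\ (forall (r : R) a b c, K a -> K b -> K c ->
           ip ((r%:C)%C *: a + b) c = r * ip a c + ip b c),
        (forall a b, K a -> K b -> ip a b = ip b a),
        (forall a, K a -> a != 0 -> 0 < ip a a)
      & (forall a b c, K a -> K b -> K c ->
           ip (br c a) b + ip a (br c b) = 0)].

Definition almost_compact (e x f : V) (phi : V -> V) : Prop :=
  [/\ conj_lin_inv_aut phi, phi e = e, phi x = x, phi f = f
    & compact_on_gnat e x f phi].

End LieSuper.

From HB Require Import structures.
From mathcomp Require Import all_boot all_order all_algebra.
From mathcomp Require Import complex reals ring zify.
Set Implicit Arguments. Unset Strict Implicit. Unset Printing Implicit Defensive.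
Import GRing.Theory Num.Theory.
Local Open Scope ring_scope.
Import passmx.

(* Let psi := phi \o phi'.  It is a complex-linear automorphism fixing g_0
   pointwise and f, so it commutes with the action of g_0 on the irreducible
   g_0-module g_{1/2}, where by Schur's lemma it is a scalar l.  Since
   [f, g_{-1/2}] lies in g_{-3/2} = 0, ad f \o ad e is 1/2 on g_{-1/2}, so psi is
   l there too; and l^2 = 1 because psi fixes [g_{1/2}, g_{-1/2}] (a subspace of g_0),
   which is nonzero by nondegeneracy of the invariant form.  Hence phi' = phi \o psi
   is phi on g_0 and on g_{+-1} = C e, C f, and l phi on g_{+-1/2}. *)

Section LinearMaps.
Variables (F : fieldType) (V : vectType F) (h : V -> V).
Hypothesis h_linear : linear h.

Definition lfun_of : 'End(V) :=
  linfun (HB.pack h (GRing.isLinear.Build _ _ _ _ h h_linear) : {linear V -> V}).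

Lemma lfun_ofE v : lfun_of v = h v.
Proof. by rewrite lfunE. Qed.

Lemma linear_funZ a v : h (a *: v) = a *: h v.
Proof. by rewrite -!lfun_ofE linearZ. Qed.

Lemma mem_leigenspace_of l v : (v \in leigenspace lfun_of l) = (h v == l *: v).
Proof.
by rewrite memv_ker add_lfunE opp_lfunE scale_lfunE id_lfunE lfun_ofE subr_eq0.
Qed.

End LinearMaps.

Lemma lfun_eigenvector (F : closedFieldType) (W : vectType F) (g : 'End(W)) :
  (0 < \dim {:W})%N -> exists l (w : W), w != 0 /\ g w = l *: w.
Proof.
move=> dimW_gt0; have eb : basis_of {:W} (vbasis {:W}) := vbasisP _.
have [l] : exists l, root (char_poly (mxof (vbasis {:W}) (vbasis {:W}) g)) l.
  by apply/closed_rootP; rewrite size_char_poly -(prednK dimW_gt0).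
rewrite -eigenvalue_root_char /eigenvalue -(vsof_eq0 eb) -(leigenspaceE eb) -vpick0.
move=> w_neq0; exists l, (vpick (leigenspace g l)); split=> //.
have := memv_pick (leigenspace g l).
by rewrite memv_ker add_lfunE opp_lfunE scale_lfunE id_lfunE subr_eq0 => /eqP.
Qed.

Lemma stable_eigenvector (F : closedFieldType) (V : vectType F) (U : {vspace V})
    (g : 'End(V)) :
  U != 0%VS -> (forall u, u \in U -> g u \in U) ->
  exists l v, [/\ v \in U, v != 0 & g v = l *: v].
Proof.
move=> U_neq0 gU; pose gU' : 'End(subvs_of U) := (linfun (vsproj U) \o g \o linfun vsval)%VF.
have [|l [w [w_neq0 gw]]] := lfun_eigenvector gU'.
  by rewrite dimvf lt0n dimv_eq0.
exists l, (vsval w); split; first exact: subvsP.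
  by apply: contra w_neq0 => /eqP w0; apply/eqP/val_inj; rewrite /= w0.
by move: gw => /(congr1 vsval); rewrite !comp_lfunE !lfunE /= vsprojK ?gU ?subvsP.
Qed.

Lemma half_intD (F : numFieldType) (m k : int) :
  m%:~R / 2 + k%:~R / 2 = (m + k)%:~R / 2 :> F.
Proof. by rewrite -mulrDl intrD. Qed.

Lemma half_int_eq0 (F : numFieldType) (k : int) : (k%:~R / 2 == 0 :> F) = (k == 0).
Proof. by rewrite mulf_eq0 invr_eq0 pnatr_eq0 orbF intr_eq0. Qed.

Lemma half_intE (F : numFieldType) :
  ((-2)%:~R / 2 = -1 :> F) * ((-1)%:~R / 2 = - 2^-1 :> F) * (0%:~R / 2 = 0 :> F)
  * (1%:~R / 2 = 2^-1 :> F) * (2%:~R / 2 = 1 :> F).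
Proof. by do !split; field. Qed.

Section Semilinear.
Variables (R : realType) (V : vectType R[i]) (phi : V -> V).
Hypothesis phi_semilinear : forall a u v, phi (a *: u + v) = conjc a *: phi u + phi v.

Lemma semilin0 : phi 0 = 0.
Proof.
apply: (addrI (phi 0)); rewrite addr0.
by have := phi_semilinear 1 0 0; rewrite scale1r addr0 conjc1 scale1r.
Qed.

Lemma semilinZ a u : phi (a *: u) = conjc a *: phi u.
Proof. by rewrite -[a *: u]addr0 phi_semilinear semilin0 addr0. Qed.

Lemma semilinD u v : phi (u + v) = phi u + phi v.
Proof. by rewrite -[u]scale1r phi_semilinear conjc1 !scale1r. Qed.

End Semilinear.

Section LieSuperalgebra.
Variable R : realType.
Local Notation C := R[i].
Variables (V : vectType C) (ev od : {vspace V}) (br : V -> V -> V).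

Lemma conj_lin_aut_comp_linear phi phi' :
  conj_lin_inv_aut ev od br phi -> conj_lin_inv_aut ev od br phi' ->
  linear (phi \o phi').
Proof. by move=> [phiL _ _ _ _] [phi'L _ _ _ _] a u v /=; rewrite phi'L phiL conjcK. Qed.

Hypothesis lsa : is_lie_superalgebra ev od br.

Lemma br_linear u : linear (br u).
Proof. by case: lsa => _ [_ brR] _ _ _ a v w; apply: brR. Qed.

Lemma br_linear_l w : linear (br^~ w).
Proof. by case: lsa => _ [brL _] _ _ _ a u v; apply: brL. Qed.

Lemma br0r u : br u 0 = 0.
Proof. by rewrite -(lfun_ofE (br_linear u)) linear0. Qed.

Lemma brZr u a v : br u (a *: v) = a *: br u v.
Proof. exact: (linear_funZ (br_linear u)). Qed.

Lemma brZl a u v : br (a *: u) v = a *: br u v.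
Proof. exact: (linear_funZ (br_linear_l v)). Qed.

Lemma brNl u v : br (- u) v = - br u v.
Proof. by rewrite -!(lfun_ofE (br_linear_l v)) linearN. Qed.

Lemma jacobi_even q u v w : homog ev od false u -> homog ev od q v ->
  br u (br v w) = br (br u v) w + br v (br u w).
Proof. by case: lsa => _ _ _ _ jacobi hu hv; rewrite (jacobi false q) // scale1r. Qed.

Lemma br_even_anti q u v : homog ev od false u -> homog ev od q v ->
  br v u = - br u v.
Proof.
by case: lsa => _ _ _ anti _ hu hv; rewrite (anti q false) // /ssign andbF scale1r.
Qed.

Lemma br_even_self u : homog ev od false u -> br u u = 0.
Proof.
move=> hu; have /eqP : br u u *+ 2 = 0 by rewrite mulr2n {1}(br_even_anti hu hu) addNr.
by rewrite -scaler_nat scaler_eq0 pnatr_eq0 => /eqP.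
Qed.

Variable B : V -> V -> C.
Hypothesis formB : good_form ev od br B.

Lemma form0l v : B 0 v = 0.
Proof.
case: formB => BL _ _ _ _; apply: (addrI (B 0 v)); rewrite addr0.
by have := BL 1 0 0 v; rewrite scale1r addr0 mul1r.
Qed.

Lemma form0r u : B u 0 = 0.
Proof.
case: formB => _ BR _ _ _; apply: (addrI (B u 0)); rewrite addr0.
by have := BR 1 u 0 0; rewrite scale1r addr0 mul1r.
Qed.

Lemma formZl a u v : B (a *: u) v = a * B u v.
Proof. by case: formB => BL _ _ _ _; rewrite -[a *: u]addr0 BL form0l addr0. Qed.

Lemma formZr a u v : B u (a *: v) = a * B u v.
Proof. by case: formB => _ BR _ _ _; rewrite -[a *: v]addr0 BR form0r addr0. Qed.

Lemma formDr u v w : B u (v + w) = B u v + B u w.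
Proof. by case: formB => _ BR _ _ _; rewrite -[v]scale1r BR mul1r scale1r. Qed.

Section MinimalGrading.
Variables e x f : V.
Hypothesis sl2 : minimal_sl2 ev od br e x f.

Local Notation gr k := (in_gr br x ((k : int)%:~R / 2)).

Lemma sl2_triple_even : [/\ homog ev od false e, homog ev od false x & homog ev od false f].
Proof. by case: sl2. Qed.

Lemma gr_e : gr 2 e.
Proof. by case: sl2 => _ [xe _ _] _ _ _; rewrite /in_gr xe half_intE scale1r. Qed.

Lemma gr_f : gr (-2) f.
Proof. by case: sl2 => _ [_ xf _] _ _ _; rewrite /in_gr xf half_intE scaleN1r. Qed.

Lemma gr0_even a : gr 0 a -> homog ev od false a.
Proof. by case: sl2 => _ _ _ _ [_ even0]; rewrite half_intE; apply: even0. Qed.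

Lemma gr_half_odd a : gr 1 a \/ gr (-1) a -> homog ev od true a.
Proof. by case: sl2 => _ _ _ _ [odd_half _]; rewrite !half_intE; apply: odd_half. Qed.

Lemma gr_br q m k c w : homog ev od q c -> gr m c -> gr k w ->
  gr (m + k) (br c w).
Proof.
have [_ x_even _] := sl2_triple_even.
move=> hc gc gw; rewrite /in_gr (jacobi_even _ x_even hc) gc gw.
by rewrite brZl brZr -scalerDl half_intD.
Qed.

Lemma gr_decomp a : exists am2 am1 a0 a1 a2,
  [/\ gr (-2) am2, gr (-1) am1, gr 0 a0, gr 1 a1 & gr 2 a2]
  /\ a = am2 + am1 + a0 + a1 + a2.
Proof.
case: sl2 => _ _ /(_ a) [am2 [am1 [a0 [a1 [a2 [[? ?] ? ? ? ->]]]]]] _ _.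
by exists am2, am1, a0, a1, a2; rewrite !half_intE.
Qed.

Lemma gr_eq_additive (W : nmodType) (h h' : V -> W) :
  {morph h : u v / u + v} -> {morph h' : u v / u + v} ->
  (forall (k : int) a, (-2 <= k <= 2)%R -> gr k a -> h a = h' a) -> h =1 h'.
Proof.
move=> hD h'D hh' a; have [am2 [am1 [a0 [a1 [a2 [[? ? ? ? ?] ->]]]]]] := gr_decomp a.
by rewrite !hD !h'D (hh' (-2) am2) ?(hh' (-1) am1) ?(hh' 0 a0) ?(hh' 1 a1) ?(hh' 2 a2).
Qed.

Lemma form_gr_orth p m k u w : homog ev od p u -> gr m u -> gr k w ->
  m + k != 0 -> B u w = 0.
Proof.
case: formB => _ _ _ Binv _; have [_ x_even _] := sl2_triple_even.
move=> hu gu gw mk_neq0.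
have Bxw : B u (br x w) = k%:~R / 2 * B u w by rewrite gw formZr.
have Bxu : B u (br x w) = - (m%:~R / 2 * B u w).
  by rewrite -Binv (br_even_anti x_even hu) gu -scaleNr formZl mulNr.
have /eqP : (m + k)%:~R / 2 * B u w = 0 by rewrite -half_intD mulrDl -Bxw Bxu addrN.
by rewrite mulf_eq0 half_int_eq0 (negbTE mk_neq0) => /eqP.
Qed.

Lemma gr_eq0_of_form p m u : homog ev od p u -> gr m u ->
  (forall (k : int) w, (-2 <= k <= 2)%R -> m + k = 0 -> gr k w -> B u w = 0) -> u = 0.
Proof.
case: formB => _ _ _ _ Bnondeg hu gu Bu0; apply: Bnondeg.
apply: (@gr_eq_additive _ (B u) (fun=> 0)) => [v w | v w | k w k_range gw].
- exact: formDr.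
- by rewrite addr0.
have [mk0 | mk_neq0] := eqVneq (m + k) 0; first exact: Bu0 mk0 gw.
exact: form_gr_orth hu gu gw mk_neq0.
Qed.

Lemma gr_out_of_range_eq0 p m u : homog ev od p u -> gr m u -> (2 < `|m|)%R -> u = 0.
Proof. by move=> hu gu m_gt2; apply: gr_eq0_of_form hu gu _ => k w ? ? _; exfalso; lia. Qed.

Lemma br_f_mhalf b : gr (-1) b -> br f b = 0.
Proof.
have [_ _ f_even] := sl2_triple_even; case: lsa => _ _ hom _ _ gb.
have b_odd : homog ev od true b by apply: gr_half_odd; right.
exact: (gr_out_of_range_eq0 (hom _ _ _ _ f_even b_odd) (gr_br f_even gr_f gb)).
Qed.

Lemma br_f_e_mhalf b : gr (-1) b -> br f (br e b) = 2^-1 *: b.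
Proof.
have [e_even _ f_even] := sl2_triple_even; case: sl2 => _ [_ _ ef] _ _ _ gb.
rewrite (jacobi_even _ f_even e_even) (br_f_mhalf gb) br0r addr0.
by rewrite (br_even_anti e_even f_even) ef brNl gb half_intE scaleNr opprK.
Qed.

Lemma br_half_nondeg a : gr 1 a -> (forall w, gr (-1) w -> br a w = 0) -> a = 0.
Proof.
case: formB => _ _ _ Binv _ ga a_br0.
have a_odd : homog ev od true a by apply: gr_half_odd; left.
apply: (gr_eq0_of_form a_odd ga) => k w _ k_val.
have -> : k = -1 by lia.
move=> gw; have /eqP : 1%:~R / 2 * B a w = 0 by rewrite -formZl -ga Binv a_br0 // form0r.
by rewrite mulf_eq0 half_int_eq0 => /eqP.
Qed.

Hypothesis irr : half_irreducible br x.

Section HalfSign.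
Variable psi : V -> V.
Hypotheses (psi_linear : linear psi)
  (psi_br : forall u v, psi (br u v) = br (psi u) (psi v))
  (psi_g0 : forall a, gr 0 a -> psi a = a) (psi_f : psi f = f).

Lemma psi_gr k a : gr k a -> gr k (psi a).
Proof.
have [_ x_even _] := sl2_triple_even.
have psi_x : psi x = x by apply: psi_g0; rewrite /in_gr br_even_self // half_intE scale0r.
by rewrite /in_gr => ga; rewrite -{1}psi_x -psi_br ga linear_funZ.
Qed.

Lemma psi_half_scalar : exists l, forall a, gr 1 a -> psi a = l *: a.
Proof.
have [[a0 [ga0 a0_neq0]] irr_sub] := irr.
have half1 : (2^-1 : C) = 1%:~R / 2 by rewrite half_intE.
rewrite half1 in ga0 irr_sub.
pose U := leigenspace (lfun_of (br_linear x)) (1%:~R / 2).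
have memU a : (a \in U) = (br x a == 1%:~R / 2 *: a) by rewrite mem_leigenspace_of.
(* Keep U opaque: otherwise matching [_ \in U] unfolds eigenspace computations. *)
clearbody U.
have U_neq0 : U != 0%VS.
  by apply: contraNneq a0_neq0 => U0; rewrite -memv0 -U0 memU; apply/eqP.
have psiU u : u \in U -> lfun_of psi_linear u \in U.
  by rewrite lfun_ofE !memU => /eqP/psi_gr/eqP.
have [l [v [vU v_neq0 psiv]]] := stable_eigenvector U_neq0 psiU.
(* Schur: the l-eigenspace of psi in g_{1/2} is a nonzero g_0-submodule. *)
pose W := (U :&: leigenspace (lfun_of psi_linear) l)%VS.
have memW a : (a \in W) = (br x a == 1%:~R / 2 *: a) && (psi a == l *: a).
  by rewrite memv_cap memU mem_leigenspace_of.
clearbody W.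
exists l; have [W0 | W_full] : W = 0%VS \/ (forall a, gr 1 a -> a \in W).
- apply: irr_sub => [a | c a gc]; rewrite memW => /andP[/eqP ga /eqP psia] //.
  have {}gc : gr 0 c by rewrite half_intE.
  rewrite memW; apply/andP; split; apply/eqP; first exact: (gr_br (gr0_even gc) gc ga).
  by rewrite psi_br psi_g0 // psia brZr.
- have vW : v \in W by rewrite memW -memU vU -psiv lfun_ofE eqxx.
  by move: v_neq0; rewrite -memv0 -W0 vW.
- by move=> a /W_full; rewrite memW => /andP[_ /eqP].
Qed.

Section Scalar.
Variable l : C.
Hypothesis psi_half : forall a, gr 1 a -> psi a = l *: a.

Lemma psi_mhalf b : gr (-1) b -> psi b = l *: b.
Proof.
have [e_even _ _] := sl2_triple_even; move=> gb.
have geb : gr 1 (br e b) := gr_br e_even gr_e gb.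
have -> : b = 2%:R *: br f (br e b).
  by rewrite br_f_e_mhalf // scalerA mulfV ?scale1r // pnatr_eq0.
by rewrite linear_funZ // psi_br psi_f psi_half // brZr scalerA mulrC -scalerA.
Qed.

Lemma half_scalar_sqr : l ^+ 2 = 1.
Proof.
have [[a0 [ga0 a0_neq0]] _] := irr.
have {}ga0 : gr 1 a0 by rewrite half_intE.
have a0_odd : homog ev od true a0 by apply: gr_half_odd; left.
apply/eqP; apply: contraNT a0_neq0 => l2_neq1; apply/eqP.
apply: (br_half_nondeg ga0) => w gw.
have /eqP := psi_g0 (gr_br a0_odd ga0 gw).
rewrite psi_br psi_half // psi_mhalf // brZl brZr scalerA -expr2 -subr_eq0.
by rewrite -[X in _ - X]scale1r -scalerBl scaler_eq0 subr_eq0 (negbTE l2_neq1) => /eqP.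
Qed.

End Scalar.

Lemma aut_half_sign :
  exists2 l, l ^+ 2 = 1 & forall a, gr 1 a \/ gr (-1) a -> psi a = l *: a.
Proof.
have [l psi_half] := psi_half_scalar.
exists l; first exact: half_scalar_sqr psi_half.
by move=> a [/psi_half | /(psi_mhalf psi_half)].
Qed.

End HalfSign.

Section AlmostCompact.
Variables phi phi' : V -> V.
Hypotheses (phi_ac : almost_compact ev od br e x f phi)
  (phi'_ac : almost_compact ev od br e x f phi')
  (phi'_g0 : forall a, in_gr br x 0 a -> phi' a = phi a).

Lemma phi'_pm1 a : gr 2 a \/ gr (-2) a -> phi' a = phi a.
Proof.
case: phi_ac phi'_ac => [[phiL _ _ _ _] phi_e _ phi_f _] [[phi'L _ _ _ _] phi'_e _ phi'_f _].
case: sl2 => _ _ _ [g1_span gm1_span] _.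
rewrite !half_intE => -[/g1_span | /gm1_span] [c ->].
  by rewrite (semilinZ phiL) (semilinZ phi'L) phi_e phi'_e.
by rewrite (semilinZ phiL) (semilinZ phi'L) phi_f phi'_f.
Qed.

Lemma phi'_half_sign : exists2 l, l = 1 \/ l = -1 &
  forall a, gr 1 a \/ gr (-1) a -> phi' a = l *: phi a.
Proof.
have [phi_aut _ _ phi_f _] := phi_ac; have [phi'_aut _ _ phi'_f _] := phi'_ac.
have [phiL phiK phi_br _ _] := phi_aut; have [_ _ phi'_br _ _] := phi'_aut.
have [||a|/=|l l_sqr psi_l] := @aut_half_sign (phi \o phi').
- exact: conj_lin_aut_comp_linear phi_aut phi'_aut.
- by move=> u v /=; rewrite phi'_br phi_br.
- by rewrite half_intE => ga /=; rewrite phi'_g0 // phiK.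
- by rewrite phi'_f phi_f.
have l_pm1 : l = 1 \/ l = -1.
  by move/eqP: l_sqr; rewrite sqrf_eq1 => /orP[/eqP|/eqP]; [left | right].
exists l => // a /psi_l /= psia; rewrite -[phi' a]phiK psia (semilinZ phiL).
by case: l_pm1 => ->; rewrite ?rmorph1 ?rmorphN1.
Qed.

Lemma phi'_gr_sign : exists2 l, l = 1 \/ l = -1 &
  forall k : int, (-2 <= k <= 2)%R -> forall a, gr k a -> phi' a = l ^ k *: phi a.
Proof.
have [l l_pm1 phi'_half] := phi'_half_sign.
exists l => // k k_range a ga.
have l_sqr : l ^+ 2 = 1 by case: l_pm1 => ->; rewrite ?sqrrN expr1n.
have l_inv : l^-1 = l by case: l_pm1 => ->; rewrite ?invr1 ?invrN1.
have : k = -2 \/ k = -1 \/ k = 0 \/ k = 1 \/ k = 2 by lia.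
case=> [|[|[|[|]]]] k_val; move: ga; rewrite k_val => ga.
- rewrite (phi'_pm1 (or_intror ga)).
  by rewrite -[l ^ (-2)]/((l ^+ 2)^-1) l_sqr invr1 scale1r.
- by rewrite (phi'_half _ (or_intror ga)) -[l ^ (-1)]/(l^-1) l_inv.
- by rewrite half_intE in ga; rewrite phi'_g0 // expr0z scale1r.
- by rewrite (phi'_half _ (or_introl ga)).
- by rewrite (phi'_pm1 (or_introl ga)) -[l ^ 2]/(l ^+ 2) l_sqr scale1r.
Qed.

End AlmostCompact.
End MinimalGrading.
End LieSuperalgebra.

Theorem proposition4p2 (R : realType) (V : vectType R[i])
    (ev od : {vspace V}) (br : V -> V -> V) (e x f : V) (phi phi' : V -> V) :
  basic_simple ev od br ->
  minimal_sl2 ev od br e x f ->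
  half_irreducible br x ->
  almost_compact ev od br e x f phi ->
  almost_compact ev od br e x f phi' ->
  (forall a, in_gr br x 0 a -> phi' a = phi a) ->
  (forall a, phi' a = phi a) \/
  (forall (k : int), (-2 <= k <= 2)%R ->
     forall a, in_gr br x (k%:~R / 2) a -> phi' a = (-1) ^ k *: phi a).
Proof.
move=> [[lsa _] _ [B formB]] sl2 irr phi_ac phi'_ac phi'_g0.
have [l [->|->] phi'_gr] := phi'_gr_sign lsa formB sl2 irr phi_ac phi'_ac phi'_g0;
  [left | by right].
case: phi_ac phi'_ac => [[phiL _ _ _ _] _ _ _ _] [[phi'L _ _ _ _] _ _ _ _].
apply: (gr_eq_additive sl2 (semilinD phi'L) (semilinD phiL)) => k a k_range ga.
by rewrite (phi'_gr k) // exp1rz scale1r.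
Qed.
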